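(* Let $\mathsf{G}$ be a global type. If $\mathsf{G}$ is projectable, then its event structure $\mathcal{S}(\mathsf{G})$ is semantically projectable.
   Context: Participants are ranged over by $\mathsf{p},\mathsf{q},\mathsf{r},\mathsf{s}$ and message labels by $\lambda$. Global types are defined coinductively (and assumed regular, i.e. with finitely many distinct subtrees): $\mathsf{G} ::= \mathsf{p}\to\mathsf{q}:\{\lambda_i;\mathsf{G}_i\}_{i\in I} \mid \mathsf{End}$, with $I$ finite non-empty and the $\lambda_i$ pairwise distinct. Processes (coinductive): $P ::= \bigoplus_{i\in I}\mathsf{p}!\lambda_i;P_i \mid \sum_{i\in I}\mathsf{p}?\lambda_i;P_i \mid \mathbf{0}$. A communication is $\alpha=\mathsf{p}\mathsf{q}\lambda$ with $\mathrm{part}(\mathsf{p}\mathsf{q}\lambda)=\{\mathsf{p},\mathsf{q}\}$; a trace is a finite sequence of communications, $\mathrm{part}$ extended to traces by union. $\mathrm{Tr}(\mathsf{End})=\emptyset$, $\mathrm{Tr}(\mathsf{p}\to\mathsf{q}:\{\lambda_i;\mathsf{G}_i\}_{i\in I})=\{\mathsf{p}\mathsf{q}\lambda_i\cdot\sigma\mid i\in I,\ \sigma=\epsilon\text{ or }\sigma\in\mathrm{Tr}(\mathsf{G}_i)\}$, and $\mathrm{part}(\mathsf{G})=\bigcup_{\sigma\in\mathrm{Tr}(\mathsf{G})}\mathrm{part}(\sigma)$. Projection (coinductive, partial): $\mathsf{G}\upharpoonright\mathsf{r}=\mathbf{0}$ if $\mathsf{r}\notin\mathrm{part}(\mathsf{G})$;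 for $\mathsf{G}=\mathsf{p}\to\mathsf{q}:\{\lambda_i;\mathsf{G}_i\}_{i\in I}$: $\mathsf{G}\upharpoonright\mathsf{r}=\sum_{i\in I}\mathsf{p}?\lambda_i;(\mathsf{G}_i\upharpoonright\mathsf{r})$ if $\mathsf{r}=\mathsf{q}$; $=\bigoplus_{i\in I}\mathsf{q}!\lambda_i;(\mathsf{G}_i\upharpoonright\mathsf{r})$ if $\mathsf{r}=\mathsf{p}$; $=\mathsf{G}_1\upharpoonright\mathsf{r}$ if $\mathsf{r}\notin\{\mathsf{p},\mathsf{q}\}$, $\mathsf{r}\in\mathrm{part}(\mathsf{G}_1)$ and $\mathsf{G}_i\upharpoonright\mathsf{r}=\mathsf{G}_1\upharpoonright\mathsf{r}$ for all $i\in I$; undefined otherwise. $\mathsf{G}$ is projectable if $\mathsf{G}\upharpoonright\mathsf{p}$ is defined for all $\mathsf{p}$. Projection of a trace on $\mathsf{r}$: $\epsilon\upharpoonright\mathsf{r}=\epsilon$; $(\mathsf{p}\mathsf{q}\lambda\cdot\sigma)\upharpoonright\mathsf{r}$ equals $\mathsf{q}!\lambda\cdot(\sigma\upharpoonright\mathsf{r})$ if $\mathsf{r}=\mathsf{p}$, $\mathsf{p}?\lambda\cdot(\sigma\upharpoonright\mathsf{r})$ if $\mathsf{r}=\mathsf{q}$, and $\sigma\upharpoonright\mathsf{r}$ otherwise. Event structure of $\mathsf{G}$: permutation equivalence $\sim$ is the least equivalence on traces with $\sigma\cdot\alpha\cdot\alpha'\cdot\sigma'\sim\sigma\cdot\alpha'\cdot\alpha\cdot\sigma'$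 whenever $\mathrm{part}(\alpha)\cap\mathrm{part}(\alpha')=\emptyset$; $[\sigma]$ is the class of $\sigma$. A non-empty trace $\sigma=\sigma[1]\cdots\sigma[n]$ is pointed if for every $1\le i<n$ there is $j$ with $i<j\le n$ and $\mathrm{part}(\sigma[i])\cap\mathrm{part}(\sigma[j])\ne\emptyset$. A g-event is $[\sigma]$ with $\sigma$ pointed; its communication $\mathrm{cm}([\sigma])$ is the last element of $\sigma$ (independent of the representative). Causal prefixing: $\alpha\circ[\sigma]=[\alpha\cdot\sigma]$ if $\mathrm{part}(\alpha)\cap\mathrm{part}(\sigma)\ne\emptyset$, $=[\sigma]$ otherwise; $\epsilon\circ\gamma=\gamma$, $(\alpha\cdot\sigma)\circ\gamma=\alpha\circ(\sigma\circ\gamma)$. $\mathrm{ev}(\sigma\cdot\alpha)=\sigma\circ[\alpha]$. Causality: $\gamma\le\gamma'$ if $\gamma=[\sigma]$ and $\gamma'=[\sigma\cdot\sigma']$ for some $\sigma,\sigma'$. Conflict: $\gamma\#\gamma'$ if $\gamma=[\sigma\cdot\mathsf{p}\mathsf{q}\lambda_1\cdot\sigma_1]$, $\gamma'=[\sigma\cdot\mathsf{p}\mathsf{q}\lambda_2\cdot\sigma_2]$ with $\lambda_1\ne\lambda_2$. $\mathcal{S}(\mathsf{G})=(\mathcal{E}(\mathsf{G}),\le_{\mathsf{G}},\#_{\mathsf{G}})$ with $\mathcal{E}(\mathsf{G})=\{\mathrm{ev}(\sigma)\mid\sigma\in\mathrm{Tr}(\mathsf{G})\}$ and the relations restricted to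 $\mathcal{E}(\mathsf{G})$. Two events $\gamma_1,\gamma_2\in\mathcal{E}(\mathsf{G})$ are in initial conflict if $\gamma_1=[\sigma\cdot\mathsf{p}\mathsf{q}\lambda_1]$ and $\gamma_2=[\sigma\cdot\mathsf{p}\mathsf{q}\lambda_2]$ for some $\sigma,\mathsf{p},\mathsf{q}$ and $\lambda_1\ne\lambda_2$. $\mathcal{S}(\mathsf{G})$ is semantically projectable if for all $\gamma_1,\gamma_2\in\mathcal{E}(\mathsf{G})$ in initial conflict the following holds: whenever there is $\gamma_1'=[\sigma_1\cdot\alpha_1]\in\mathcal{E}(\mathsf{G})$ with $\gamma_1\le_{\mathsf{G}}\gamma_1'$ and a participant $\mathsf{r}\in\mathrm{part}(\alpha_1)\setminus\mathrm{part}(\mathrm{cm}(\gamma_1))$, there is $\gamma_2'=[\sigma_2\cdot\alpha_2]\in\mathcal{E}(\mathsf{G})$ with $\gamma_2\le_{\mathsf{G}}\gamma_2'$, $\alpha_2=\alpha_1$ and $\sigma_2\upharpoonright\mathsf{r}=\sigma_1\upharpoonright\mathsf{r}$. *)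

From Stdlib Require Import List Relations Arith.
Import ListNotations.

Definition participant := nat.
Definition label := nat.

(** Global types (coinductive trees). A branch list [(l_i, G_i)]_i represents
    {l_i; G_i}_{i in I}; "G_1" is the head of the list. *)
CoInductive gtype : Type :=
| GEnd : gtype
| GMsg : participant -> participant -> list (label * gtype) -> gtype.

(** Processes (coinductive trees). [PSend q bs] is (+)_i q!l_i;P_i,
    [PRecv p bs] is Sum_i p?l_i;P_i, [PEnd] is 0. *)
CoInductive process : Type :=
| PEnd : process
| PSend : participant -> list (label * process) -> process
| PRecv : participant -> list (label * process) -> process.

Inductive subtree : gtype -> gtype -> Prop :=
| st_refl G : subtree G G
| st_child p q bs l G' H :
    In (l, G') bs -> subtree G' H -> subtree (GMsg p q bs) H.

CoInductive gbisim : gtype -> gtype -> Prop :=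
| gb_end : gbisim GEnd GEnd
| gb_msg p q bs bs' :
    Forall2 (fun b b' => fst b = fst b' /\ gbisim (snd b) (snd b')) bs bs' ->
    gbisim (GMsg p q bs) (GMsg p q bs').

(** Well-formedness from the grammar: every branching has a finite non-empty
    set of pairwise distinct labels. *)
Definition gwf (G : gtype) : Prop :=
  forall H p q bs, subtree G H -> H = GMsg p q bs ->
    bs <> [] /\ NoDup (map fst bs).

Definition gregular (G : gtype) : Prop :=
  exists l : list gtype, forall H, subtree G H -> exists H', In H' l /\ gbisim H H'.

Definition comm := (participant * participant * label)%type.

Definition cparts (a : comm) : list participant :=
  let '(p, q, _) := a in [p; q].

Definition tparts (s : list comm) : list participant := flat_map cparts s.

Inductive trace_of : gtype -> list comm -> Prop :=
| tr_one p q bs l G' :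
    In (l, G') bs -> trace_of (GMsg p q bs) [(p, q, l)]
| tr_cons p q bs l G' s :
    In (l, G') bs -> trace_of G' s -> trace_of (GMsg p q bs) ((p, q, l) :: s).

Definition in_part (r : participant) (G : gtype) : Prop :=
  exists s, trace_of G s /\ In r (tparts s).

CoInductive proj : gtype -> participant -> process -> Prop :=
| proj_out G r :
    ~ in_part r G -> proj G r PEnd
| proj_recv p q bs r Ps :
    in_part r (GMsg p q bs) -> r = q ->
    Forall2 (fun b c => fst b = fst c /\ proj (snd b) r (snd c)) bs Ps ->
    proj (GMsg p q bs) r (PRecv p Ps)
| proj_send p q bs r Ps :
    in_part r (GMsg p q bs) -> r <> q -> r = p ->
    Forall2 (fun b c => fst b = fst c /\ proj (snd b) r (snd c)) bs Ps ->
    proj (GMsg p q bs) r (PSend q Ps)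
| proj_skip p q l1 G1 bs' r P :
    in_part r (GMsg p q ((l1, G1) :: bs')) -> r <> q -> r <> p ->
    in_part r G1 ->
    Forall (fun b => proj (snd b) r P) ((l1, G1) :: bs') ->
    proj (GMsg p q ((l1, G1) :: bs')) r P.

Definition projectable (G : gtype) : Prop :=
  forall r, exists P, proj G r P.

Inductive action : Type :=
| ASend : participant -> label -> action
| ARecv : participant -> label -> action.

Fixpoint tproj (s : list comm) (r : participant) : list action :=
  match s with
  | [] => []
  | (p, q, l) :: s' =>
      if Nat.eqb r p then ASend q l :: tproj s' r
      else if Nat.eqb r q then ARecv p l :: tproj s' r
      else tproj s' r
  end.

Definition disjoint (l1 l2 : list participant) : Prop :=
  forall x, In x l1 -> In x l2 -> False.

Inductive swap_step : list comm -> list comm -> Prop :=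
| sw s a b s' :
    disjoint (cparts a) (cparts b) ->
    swap_step (s ++ a :: b :: s') (s ++ b :: a :: s').

Definition perm_equiv : list comm -> list comm -> Prop :=
  clos_refl_sym_trans (list comm) swap_step.

(** Causal prefixing on representatives: a o [s] = [a.s] if part(a) meets
    part(s), [s] otherwise; (a.s) o g = a o (s o g). *)
Definition shares (a : comm) (s : list comm) : bool :=
  existsb (fun x => existsb (Nat.eqb x) (tparts s)) (cparts a).

Fixpoint causal_prefix (s : list comm) (g : list comm) : list comm :=
  match s with
  | [] => g
  | a :: s' =>
      let g' := causal_prefix s' g in
      if shares a g' then a :: g' else g'
  end.

Definition ev (s : list comm) (a : comm) : list comm := causal_prefix s [a].

(** Events are equivalence classes of traces; we handle them through
    representatives. [event G g]: the class [g] belongs to E(G). *)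
Definition event (G : gtype) (g : list comm) : Prop :=
  exists s a, trace_of G (s ++ [a]) /\ perm_equiv g (ev s a).

Definition causal_le (g g' : list comm) : Prop :=
  exists s s', perm_equiv g s /\ perm_equiv g' (s ++ s').

Definition cm (g : list comm) : comm := last g (0, 0, 0).

Definition init_conflict (g1 g2 : list comm) : Prop :=
  exists s p q l1 l2, l1 <> l2 /\
    perm_equiv g1 (s ++ [(p, q, l1)]) /\ perm_equiv g2 (s ++ [(p, q, l2)]).

Definition sem_projectable (G : gtype) : Prop :=
  forall g1 g2, event G g1 -> event G g2 -> init_conflict g1 g2 ->
  forall (s1 : list comm) (a1 : comm) (r : participant),
    event G (s1 ++ [a1]) -> causal_le g1 (s1 ++ [a1]) ->
    In r (cparts a1) -> ~ In r (cparts (cm g1)) ->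
    exists s2 : list comm,
      event G (s2 ++ [a1]) /\ causal_le g2 (s2 ++ [a1]) /\
      tproj s2 r = tproj s1 r.

(* Write the conflicting events as [sg . p->q:l1] and [sg . p->q:l2], and the causal successor
   of the first as the event of a trace [t0 . p->q:l1 . t1 . a1].  Since [p] has the same
   history after [t0] as after the trace of the second event, projectability onto [p] makes the
   node reached by [t0] offer [l2] as well.  Below that node the branches [l1] and [l2] have the
   same projection onto every participant other than [p] and [q], so the causal chain from
   [p->q:l1] to [a1] can be replayed in the [l2] branch: each communication is scheduled when
   its endpoints outside [{p, q}] are ready for it.  In the replay [r] performs the same
   actions and still causally depends on the choice, which yields the required event. *)

From Stdlib Require Import List Relations Arith Lia Bool Classical.
Import ListNotations.

Definition involves (z : participant) (c : comm) : bool :=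
  let '(a, b, _) := c in (z =? a) || (z =? b).

Definition hist (z : participant) (W : list comm) : list comm := filter (involves z) W.

Lemma in_cparts z c : In z (cparts c) <-> involves z c = true.
Proof.
  destruct c as [[a b] l]; simpl. rewrite orb_true_iff, !Nat.eqb_eq. intuition.
Qed.

Lemma involves_endpoint z a b l : involves z (a, b, l) = true <-> z = a \/ z = b.
Proof. simpl. rewrite orb_true_iff, !Nat.eqb_eq. reflexivity. Qed.

Lemma in_tparts z W : In z (tparts W) <-> exists c, In c W /\ involves z c = true.
Proof.
  unfold tparts. rewrite in_flat_map.
  split; intros [c [H1 H2]]; exists c; rewrite in_cparts in *; auto.
Qed.

Lemma tparts_app A B : tparts (A ++ B) = tparts A ++ tparts B.
Proof. apply flat_map_app. Qed.

Lemma tparts_cons c W : tparts (c :: W) = cparts c ++ tparts W.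
Proof. reflexivity. Qed.

Lemma tparts_single c : tparts [c] = cparts c.
Proof. apply app_nil_r. Qed.

Lemma hist_app z A B : hist z (A ++ B) = hist z A ++ hist z B.
Proof. apply filter_app. Qed.

Lemma hist_single z c : hist z [c] = if involves z c then [c] else [].
Proof. unfold hist; simpl. destruct (involves z c); auto. Qed.

Lemma hist_snoc_other z W c : involves z c = false -> hist z (W ++ [c]) = hist z W.
Proof. intros E. rewrite hist_app, hist_single, E, app_nil_r. reflexivity. Qed.

Lemma hist_snoc_involved z W c : involves z c = true -> hist z (W ++ [c]) = hist z W ++ [c].
Proof. intros E. rewrite hist_app, hist_single, E. reflexivity. Qed.

Lemma in_hist_tparts z W c : In c (hist z W) -> In z (tparts W).
Proof. intros H. apply filter_In in H. apply in_tparts. exists c. exact H. Qed.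

Lemma shares_iff a L : shares a L = true <-> exists x, In x (cparts a) /\ In x (tparts L).
Proof.
  unfold shares. rewrite existsb_exists.
  split; intros [x [H1 H2]]; exists x; split; auto.
  - apply existsb_exists in H2 as [y [Hy Hxy]]. apply Nat.eqb_eq in Hxy. subst. exact Hy.
  - apply existsb_exists. exists x. split; auto. apply Nat.eqb_refl.
Qed.

Lemma shares_ext a L1 L2 : (forall x, In x (tparts L1) <-> In x (tparts L2)) ->
  shares a L1 = shares a L2.
Proof.
  intros H. apply eq_true_iff_eq. rewrite !shares_iff.
  split; intros [x [H1 H2]]; exists x; split; auto; apply H; auto.
Qed.

Lemma disjoint_sym l1 l2 : disjoint l1 l2 -> disjoint l2 l1.
Proof. unfold disjoint. eauto. Qed.

Lemma shares_single_disjoint a c : disjoint (cparts a) (cparts c) -> shares a [c] = false.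
Proof.
  intros Hd. apply not_true_iff_false. rewrite shares_iff, tparts_single.
  intros [x [H1 H2]]. exact (Hd x H1 H2).
Qed.

Lemma shares_cons a x L :
  shares a (x :: L) = false <-> disjoint (cparts a) (cparts x) /\ shares a L = false.
Proof.
  rewrite <- !not_true_iff_false, !shares_iff. unfold disjoint.
  setoid_rewrite tparts_cons. setoid_rewrite in_app_iff. firstorder.
Qed.

Lemma shares_cons_disjoint a b K : disjoint (cparts a) (cparts b) ->
  shares a (b :: K) = shares a K.
Proof.
  intros Hd. destruct (shares a K) eqn:E.
  - apply shares_iff in E as [x [H1 H2]]. apply shares_iff. exists x.
    rewrite tparts_cons, in_app_iff. auto.
  - apply shares_cons. auto.
Qed.

(** * Permutation equivalence *)

Definition pequiv : relation (list comm) := clos_refl_trans (list comm) swap_step.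

Lemma swap_step_sym x y : swap_step x y -> swap_step y x.
Proof. intros []. constructor. apply disjoint_sym; auto. Qed.

Lemma pequiv_sym x y : pequiv x y -> pequiv y x.
Proof.
  induction 1.
  - apply rt_step, swap_step_sym; auto.
  - apply rt_refl.
  - eapply rt_trans; eauto.
Qed.

Lemma perm_equivE x y : perm_equiv x y <-> pequiv x y.
Proof.
  split; induction 1.
  - apply rt_step; auto.
  - apply rt_refl.
  - apply pequiv_sym; auto.
  - eapply rt_trans; eauto.
  - apply rst_step; auto.
  - apply rst_refl.
  - eapply rst_trans; eauto.
Qed.

Lemma pequiv_app_l l x y : pequiv x y -> pequiv (l ++ x) (l ++ y).
Proof.
  induction 1.
  - apply rt_step. destruct H. rewrite !app_assoc. constructor; auto.
  - apply rt_refl.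
  - eapply rt_trans; eauto.
Qed.

Lemma pequiv_app_r l x y : pequiv x y -> pequiv (x ++ l) (y ++ l).
Proof.
  induction 1.
  - apply rt_step. destruct H. rewrite <- !app_assoc. constructor; auto.
  - apply rt_refl.
  - eapply rt_trans; eauto.
Qed.

Lemma pequiv_cons a x y : pequiv x y -> pequiv (a :: x) (a :: y).
Proof. apply (pequiv_app_l [a]). Qed.

Lemma pequiv_hist z x y : pequiv x y -> hist z x = hist z y.
Proof.
  induction 1 as [x y []| |]; [|reflexivity|congruence].
  rewrite !hist_app. simpl.
  destruct (involves z a) eqn:Ea, (involves z b) eqn:Eb; auto.
  apply in_cparts in Ea, Eb. exfalso. eauto.
Qed.

Lemma pequiv_tparts x y : pequiv x y -> forall w, In w (tparts x) <-> In w (tparts y).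
Proof.
  induction 1 as [x y []| |]; intros w; [|tauto|rewrite IHclos_refl_trans1; auto].
  rewrite !tparts_app, !tparts_cons, !in_app_iff. tauto.
Qed.

Lemma tproj_app A B r : tproj (A ++ B) r = tproj A r ++ tproj B r.
Proof.
  induction A as [|[[a b] l] A IH]; simpl; auto.
  destruct (r =? a), (r =? b); simpl; rewrite IH; auto.
Qed.

Lemma tproj_hist W r : tproj W r = tproj (hist r W) r.
Proof.
  induction W as [|[[a b] l] W IH]; simpl; auto.
  destruct (r =? a) eqn:E1, (r =? b) eqn:E2; simpl; rewrite ?E1, ?E2; simpl; rewrite ?IH; auto.
Qed.

(** * Causal prefixing *)

Fixpoint causes (s g : list comm) : list comm :=
  match s with
  | [] => []
  | a :: s' => let k := causes s' g in if shares a (k ++ g) then a :: k else k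
  end.

Lemma causal_prefixE s g : causal_prefix s g = causes s g ++ g.
Proof.
  induction s as [|a s IH]; simpl; auto. rewrite IH.
  destruct (shares a (causes s g ++ g)); auto.
Qed.

Lemma causal_prefix_app A B g :
  causal_prefix (A ++ B) g = causal_prefix A (causal_prefix B g).
Proof. induction A as [|a A IH]; simpl; auto. rewrite IH. auto. Qed.

Lemma causes_ext s g1 g2 : (forall x, In x (tparts g1) <-> In x (tparts g2)) ->
  causes s g1 = causes s g2.
Proof.
  intros H. induction s as [|a s IH]; simpl; auto. rewrite IH.
  rewrite (shares_ext a (causes s g2 ++ g1) (causes s g2 ++ g2)); auto.
  intros x. rewrite !tparts_app, !in_app_iff, H. tauto.
Qed.

Lemma causes_same_parts L c1 c2 : cparts c1 = cparts c2 -> causes L [c1] = causes L [c2].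
Proof. intros H. apply causes_ext. intros x. rewrite !tparts_single, H. tauto. Qed.

Lemma causal_prefix_pequiv s g1 g2 :
  pequiv g1 g2 -> pequiv (causal_prefix s g1) (causal_prefix s g2).
Proof.
  intros H. rewrite !causal_prefixE, (causes_ext s g1 g2).
  - apply pequiv_app_l; auto.
  - apply pequiv_tparts; auto.
Qed.

Lemma causal_prefix_swap a b m g : disjoint (cparts a) (cparts b) ->
  pequiv (causal_prefix (a :: b :: m) g) (causal_prefix (b :: a :: m) g).
Proof.
  intros H. cbn [causal_prefix]. set (K := causal_prefix m g).
  pose proof (shares_cons_disjoint a b K H) as Eab.
  pose proof (shares_cons_disjoint b a K (disjoint_sym _ _ H)) as Eba.
  destruct (shares b K) eqn:Eb, (shares a K) eqn:Ea; rewrite ?Eab, ?Eba, ?Ea, ?Eb;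
    try apply rt_refl.
  apply rt_step. apply (sw [] a b K); auto.
Qed.

Lemma causes_sub L g K x :
  In x (tparts (causes L g)) -> In x (tparts (causes L (g ++ K))).
Proof.
  revert x. induction L as [|a L IH]; simpl; auto.
  destruct (shares a (causes L g ++ g)) eqn:E1.
  - assert (E2 : shares a (causes L (g ++ K) ++ g ++ K) = true).
    { apply shares_iff in E1 as [y [Hy1 Hy2]]. apply shares_iff. exists y. split; auto.
      rewrite !tparts_app, !in_app_iff in *. destruct Hy2; auto. }
    rewrite E2. intros x. rewrite !tparts_cons, !in_app_iff. intros [H|H]; auto.
  - intros x H. destruct (shares a (causes L (g ++ K) ++ g ++ K)); auto.
    rewrite tparts_cons, in_app_iff. auto.
Qed.

Lemma causes_idem L g K : causes (causes L (g ++ K)) g = causes L g.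
Proof.
  induction L as [|a L IH]; simpl; auto.
  destruct (shares a (causes L (g ++ K) ++ g ++ K)) eqn:E1.
  - simpl. rewrite IH. auto.
  - rewrite IH. destruct (shares a (causes L g ++ g)) eqn:E2; auto.
    apply shares_iff in E2 as [y [Hy1 Hy2]].
    assert (shares a (causes L (g ++ K) ++ g ++ K) = true) by
      (apply shares_iff; exists y; split; auto; rewrite !tparts_app, !in_app_iff in *;
       destruct Hy2; auto using causes_sub).
    congruence.
Qed.

Lemma hist_causes z L g : In z (tparts g) -> hist z (causes L g) = hist z L.
Proof.
  intros Hz. induction L as [|a L IH]; simpl; auto.
  destruct (involves z a) eqn:Ea.
  - assert (shares a (causes L g ++ g) = true) as ->.
    { apply shares_iff. exists z. rewrite in_cparts, tparts_app, in_app_iff. auto. }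
    unfold hist in *. simpl. rewrite Ea, IH. auto.
  - unfold hist in *. destruct (shares a (causes L g ++ g)); simpl; rewrite ?Ea; auto.
Qed.

Lemma tproj_causes r L g : In r (tparts g) -> tproj (causes L g) r = tproj L r.
Proof. intros H. rewrite (tproj_hist (causes L g)), (tproj_hist L), hist_causes; auto. Qed.

Lemma pequiv_shift a L M : shares a L = false -> pequiv (a :: L ++ M) (L ++ a :: M).
Proof.
  induction L as [|x L IH]; simpl; intros H; [apply rt_refl|].
  apply shares_cons in H as [Hd H].
  eapply rt_trans; [apply rt_step, (sw [] a x (L ++ M)); auto|].
  apply pequiv_cons. auto.
Qed.

Lemma causal_prefix_extend A g K :
  exists s', pequiv (causal_prefix A (g ++ K)) (causal_prefix A g ++ s').
Proof.
  induction A as [|a A [s' Hs]]; simpl; [exists K; apply rt_refl|].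
  destruct (shares a (causal_prefix A g)) eqn:E1.
  - assert (shares a (causal_prefix A (g ++ K)) = true) as ->.
    { apply shares_iff in E1 as [x [H1 H2]]. apply shares_iff. exists x. split; auto.
      apply (pequiv_tparts _ _ Hs). rewrite tparts_app, in_app_iff. auto. }
    exists s'. apply pequiv_cons. auto.
  - destruct (shares a (causal_prefix A (g ++ K))).
    + exists (a :: s'). eapply rt_trans; [apply pequiv_cons, Hs|]. apply pequiv_shift. auto.
    + exists s'. auto.
Qed.

(** * Pointed traces *)

Fixpoint pointed (W : list comm) : Prop :=
  match W with
  | [] => True
  | x :: W' => match W' with [] => True | _ => shares x W' = true /\ pointed W' end
  end.

Lemma pointed_cons x W : pointed (x :: W) <-> W = [] \/ (shares x W = true /\ pointed W).
Proof. simpl. destruct W; split; auto. intros [H|H]; [discriminate|auto]. Qed.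

Lemma pointed_suffix s t : pointed (s ++ t) -> pointed t.
Proof.
  induction s as [|x s IH]; simpl; auto. intros H. apply IH.
  destruct (s ++ t); simpl; auto. destruct H; auto.
Qed.

Lemma causal_prefix_pointed s c : pointed (causal_prefix s [c]).
Proof.
  induction s as [|a s IH]; simpl; auto.
  destruct (shares a (causal_prefix s [c])) eqn:E; auto.
  apply pointed_cons. auto.
Qed.

Lemma causal_prefix_of_pointed V c : pointed (V ++ [c]) -> causal_prefix V [c] = V ++ [c].
Proof.
  induction V as [|a V IH]; intros Hp; [reflexivity|].
  rewrite <- app_comm_cons, pointed_cons in Hp.
  destruct Hp as [Hp|[H1 H2]]; [destruct V; discriminate|].
  cbn [causal_prefix]. rewrite IH, H1; auto.
Qed.

Lemma pointed_swap s a b s' : disjoint (cparts a) (cparts b) ->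
  pointed (s ++ a :: b :: s') -> s' <> [] /\ pointed (s ++ b :: a :: s').
Proof.
  intros Hd Hp. assert (Hs' : s' <> []).
  { intros ->. apply pointed_suffix in Hp as [Hp _].
    rewrite shares_single_disjoint in Hp by auto. discriminate. }
  split; auto. induction s as [|x s IH].
  - destruct Hp as [H1 H2]. destruct s' as [|y s'']; [congruence|]. destruct H2 as [H2 H3].
    rewrite shares_cons_disjoint in H1 by auto.
    repeat split; auto. rewrite shares_cons_disjoint by (apply disjoint_sym; auto). auto.
  - simpl app in *. apply pointed_cons in Hp as [Hp|[H1 H2]]; [destruct s; discriminate|].
    apply pointed_cons. right. split; auto.
    rewrite <- H1. apply shares_ext. intros w. rewrite !tparts_app, !tparts_cons, !in_app_iff.
    tauto.
Qed.

Lemma pequiv_pointed_snoc Y c W : pequiv (Y ++ [c]) W -> pointed (Y ++ [c]) ->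
  exists Y', W = Y' ++ [c] /\ pequiv Y Y' /\ pointed W.
Proof.
  remember (Y ++ [c]) as W0 eqn:E. intros Hpe. revert Y E.
  induction Hpe as [W0 W [s a b s' Hd]| |W0 W1 W2 _ IH1 _ IH2]; intros Y E Hp.
  - destruct (pointed_swap s a b s' Hd Hp) as [Hs' Hp'].
    destruct (exists_last Hs') as [s'' [x ->]].
    replace (s ++ a :: b :: s'' ++ [x]) with ((s ++ a :: b :: s'') ++ [x]) in E
      by (rewrite <- app_assoc; auto).
    apply app_inj_tail in E as [HY Hx]. subst Y x.
    exists (s ++ b :: a :: s''). rewrite <- app_assoc. repeat split; auto.
    apply rt_step. constructor. auto.
  - subst. exists Y. repeat split; auto. apply rt_refl.
  - destruct (IH1 Y E Hp) as [Y1 [E1 [P1 Hp1]]].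
    destruct (IH2 Y1 E1 Hp1) as [Y2 [E2 [P2 Hp2]]].
    exists Y2. repeat split; auto. eapply rt_trans; eauto.
Qed.

Lemma ev_pequiv_snoc t a Y c : pequiv (ev t a) (Y ++ [c]) ->
  a = c /\ pointed (Y ++ [c]) /\ pequiv (causes t [a]) Y.
Proof.
  unfold ev. intros H. pose proof (causal_prefix_pointed t a) as Hp.
  rewrite causal_prefixE in H, Hp.
  destruct (pequiv_pointed_snoc _ _ _ H Hp) as [Y' [E [HY Hp']]].
  apply app_inj_tail in E as [-> ->]. auto.
Qed.

Lemma split_middle (V R s s' : list comm) c a b : V ++ c :: R = s ++ a :: b :: s' ->
  (exists m, s = V ++ c :: m /\ R = m ++ a :: b :: s') \/
  (V = s /\ c = a /\ R = b :: s') \/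
  (V = s ++ [a] /\ c = b /\ R = s') \/
  (exists m, V = s ++ a :: b :: m /\ s' = m ++ c :: R).
Proof.
  intros H. apply app_eq_app in H as [l [[H1 H2]|[H1 H2]]].
  - destruct l as [|x [|y l']]; simpl in H2; injection H2; intros; subst.
    + right; left. rewrite app_nil_r. auto.
    + right; right; left. auto.
    + right; right; right. eauto.
  - destruct l as [|x l']; simpl in H2; injection H2; intros; subst.
    + right; left. rewrite app_nil_r. auto.
    + left. eauto.
Qed.

Lemma pequiv_occurrence W W' V c R : pequiv W W' -> W = V ++ c :: R ->
  exists V' R', W' = V' ++ c :: R' /\
    pequiv (causal_prefix V [c]) (causal_prefix V' [c]).
Proof.
  intros Hpe. revert V R.
  induction Hpe as [W W' [s a b s' Hd]| |W0 W1 W2 _ IH1 _ IH2]; intros V R HW.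
  - symmetry in HW. apply split_middle in HW.
    destruct HW as [[m [-> ->]]|[[-> [-> ->]]|[[-> [-> ->]]|[m [-> ->]]]]].
    + exists V, (m ++ b :: a :: s'). rewrite <- app_assoc. split; auto. apply rt_refl.
    + exists (s ++ [b]), s'. rewrite <- app_assoc. split; auto.
      rewrite causal_prefix_app. simpl.
      rewrite shares_single_disjoint by (apply disjoint_sym; auto). apply rt_refl.
    + exists s, (a :: s'). split; auto.
      rewrite causal_prefix_app. simpl. rewrite shares_single_disjoint by auto. apply rt_refl.
    + exists (s ++ b :: a :: m), R. rewrite <- !app_assoc. split; auto.
      rewrite !causal_prefix_app. apply causal_prefix_pequiv, causal_prefix_swap. auto.
  - exists V, R. split; auto. apply rt_refl.
  - destruct (IH1 V R HW) as [V1 [R1 [H1 H2]]].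
    destruct (IH2 V1 R1 H1) as [V2 [R2 [H3 H4]]].
    exists V2, R2. split; auto. eapply rt_trans; eauto.
Qed.

Lemma causal_prefix_cons_shares c L g : shares c (causal_prefix L g) = true ->
  causal_prefix (c :: L) g = c :: causal_prefix L g.
Proof. intros H. cbn [causal_prefix]. rewrite H. reflexivity. Qed.

Lemma causal_prefix_occurrence L g V c R :
  causal_prefix L g = V ++ c :: R -> length g <= length R ->
  exists L1 L2, L = L1 ++ c :: L2 /\ shares c (causal_prefix L2 g) = true /\
    V = causes L1 (c :: causal_prefix L2 g) /\ R = causal_prefix L2 g.
Proof.
  revert V. induction L as [|x L IH]; intros V H Hl.
  - simpl in H. subst g. rewrite length_app in Hl. simpl in Hl. lia.
  - simpl in H. destruct (shares x (causal_prefix L g)) eqn:Ex.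
    + destruct V as [|y V]; simpl in H; injection H.
      * intros <- ->. exists [], L. auto.
      * intros H' <-. destruct (IH V H' Hl) as [L1 [L2 [-> [E2 [-> ->]]]]].
        exists (x :: L1), L2. repeat split; auto. cbn [causes].
        rewrite <- (causal_prefix_cons_shares c L2 g E2), <- causal_prefixE,
          <- causal_prefix_app, Ex. auto.
    + destruct (IH V H Hl) as [L1 [L2 [-> [E2 [-> ->]]]]].
      exists (x :: L1), L2. repeat split; auto. cbn [causes].
      rewrite <- (causal_prefix_cons_shares c L2 g E2), <- causal_prefixE,
        <- causal_prefix_app, Ex. auto.
Qed.

Lemma causal_le_snoc g Y c g' : pequiv g (Y ++ [c]) -> causal_le g g' ->
  exists u, pequiv (Y ++ c :: u) g'.
Proof.
  intros H (s & s' & Hs & Hs'). rewrite perm_equivE in Hs, Hs'.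
  exists s'. eapply rt_trans; [|apply pequiv_sym, Hs'].
  replace (Y ++ c :: s') with ((Y ++ [c]) ++ s') by (rewrite <- app_assoc; auto).
  apply pequiv_app_r. eapply rt_trans; [apply pequiv_sym, H|exact Hs].
Qed.

Lemma causal_successor_split sg c t a u :
  pointed (sg ++ [c]) -> pequiv (sg ++ c :: u) (ev t a) -> a <> c ->
  exists t0 t1, t = t0 ++ c :: t1 /\ shares c (causal_prefix t1 [a]) = true /\
    pequiv (sg ++ [c]) (causal_prefix t0 [c]).
Proof.
  intros Hp HE Hac.
  destruct (pequiv_occurrence _ _ sg c u HE eq_refl) as (V & R & EV & HV).
  rewrite causal_prefix_of_pointed in HV by auto.
  assert (HR : length [a] <= length R).
  { destruct R; simpl; [|lia]. unfold ev in EV. rewrite causal_prefixE in EV.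
    apply app_inj_tail in EV as [_ ?]. congruence. }
  destruct (causal_prefix_occurrence _ _ _ _ _ EV HR) as (t0 & t1 & -> & Hsh & -> & ->).
  exists t0, t1. repeat split; auto.
  change (c :: causal_prefix t1 [a]) with ([c] ++ causal_prefix t1 [a]) in HV.
  rewrite causal_prefixE, causes_idem, <- causal_prefixE in HV. exact HV.
Qed.

Lemma pequiv_causal_prefix_hist z s t c : involves z c = true ->
  pequiv (s ++ [c]) (causal_prefix t [c]) -> hist z t = hist z s.
Proof.
  intros Hz H. apply (pequiv_hist z) in H.
  rewrite causal_prefixE, !hist_app, hist_causes in H
    by (rewrite tparts_single; apply in_cparts; auto).
  apply app_inv_tail in H. auto.
Qed.

Lemma pequiv_causal_prefix_same_parts s t c c' : cparts c = cparts c' ->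
  pequiv (s ++ [c]) (causal_prefix t [c]) -> pequiv (s ++ [c']) (causal_prefix t [c']).
Proof.
  intros Hcc H. rewrite causal_prefixE in *. rewrite <- (causes_same_parts t c c' Hcc).
  apply pequiv_app_r. apply pequiv_sym in H.
  destruct (pequiv_pointed_snoc _ _ _ H) as [Y [E [HY _]]].
  - rewrite <- causal_prefixE. apply causal_prefix_pointed.
  - apply app_inj_tail in E as [<- _]. apply pequiv_sym. auto.
Qed.

(** * Propagation of information *)

Definition inform (T : participant -> bool) (c : comm) : participant -> bool :=
  let '(a, b, _) := c in
  if T a || T b then fun z => T z || (z =? a) || (z =? b) else T.

(** [informed T W z]: [z] is in [T], or a chain of causally related communications of [W]
    leads from a participant of [T] to [z]. *)
Fixpoint informed (T : participant -> bool) (W : list comm) : participant -> bool :=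
  match W with [] => T | c :: W' => informed (inform T c) W' end.

Definition touches (T : participant -> bool) (L : list comm) : Prop :=
  exists x, In x (tparts L) /\ T x = true.

Lemma informed_app T A B : informed T (A ++ B) = informed (informed T A) B.
Proof. revert T. induction A; simpl; auto. Qed.

Lemma informed_snoc T W c : informed T (W ++ [c]) = inform (informed T W) c.
Proof. rewrite informed_app. reflexivity. Qed.

Lemma inform_mono T c z : T z = true -> inform T c z = true.
Proof. destruct c as [[a b] l]; simpl. intros H. destruct (T a || T b); rewrite ?H; auto. Qed.

Lemma informed_mono T W z : T z = true -> informed T W z = true.
Proof. revert T. induction W; simpl; auto. intros T H. apply IHW, inform_mono; auto. Qed.

Lemma inform_other T c z : involves z c = false -> inform T c z = T z.
Proof.
  destruct c as [[a b] l]; simpl. intros H. apply orb_false_iff in H as [Ha Hb].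
  destruct (T a || T b); rewrite ?Ha, ?Hb, ?orb_false_r; auto.
Qed.

Lemma inform_endpoint T a b l z : involves z (a, b, l) = true ->
  inform T (a, b, l) z = T a || T b.
Proof.
  simpl. intros H. destruct (T a || T b) eqn:E.
  - destruct (T z), (z =? a), (z =? b); simpl in *; auto.
  - apply orb_false_iff in E as [Ea Eb].
    apply orb_true_iff in H as [H|H]; apply Nat.eqb_eq in H; subst; auto.
Qed.

Lemma informed_silent T W z : hist z W = [] -> informed T W z = T z.
Proof.
  revert T. induction W as [|c W IH]; simpl; auto. intros T H. unfold hist in H. simpl in H.
  destruct (involves z c) eqn:E; [discriminate|]. rewrite IH; auto. apply inform_other; auto.
Qed.

Lemma informed_last_involved T W c r : involves r c = true ->
  informed T (W ++ [c]) r = true <-> touches (informed T W) [c].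
Proof.
  destruct c as [[a b] l]. intros Hr. rewrite informed_snoc, inform_endpoint by auto.
  unfold touches. rewrite tparts_single. simpl. rewrite orb_true_iff.
  split; [intros [H|H]; eauto|intros (x & [<-|[<-|[]]] & H); auto].
Qed.

Lemma touches_cons T c L : touches T (c :: L) <-> touches T [c] \/ touches T L.
Proof.
  unfold touches. setoid_rewrite tparts_single. setoid_rewrite tparts_cons.
  setoid_rewrite in_app_iff. firstorder.
Qed.

Lemma touches_inform T c L : touches (inform T c) L <->
  touches T L \/ (touches T [c] /\ shares c L = true).
Proof.
  destruct c as [[a b] l]. unfold touches. rewrite tparts_single. simpl.
  destruct (T a || T b) eqn:E.
  - split.
    + intros [x [H1 H2]]. rewrite !orb_true_iff, !Nat.eqb_eq in H2.
      destruct H2 as [[H2|H2]|H2]; [left; eauto|right..];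
        (split; [apply orb_true_iff in E as [E|E]; [exists a|exists b]; simpl; auto|]);
        apply shares_iff; exists x; subst; simpl; auto.
    + intros [[x [H1 H2]]|[_ H]]; [exists x; rewrite H2; auto|].
      apply shares_iff in H as [x [H1 H2]]. exists x. split; auto.
      simpl in H1. destruct H1 as [<-|[<-|[]]]; rewrite Nat.eqb_refl, ?orb_true_r; auto.
  - split; auto. intros [H|[(x & H1 & H2) _]]; auto. exfalso.
    apply orb_false_iff in E. simpl in H1. destruct H1 as [<-|[<-|[]]]; destruct E; congruence.
Qed.

Lemma touches_causal_prefix rho : forall T g,
  touches T (causal_prefix rho g) <-> touches (informed T rho) g.
Proof.
  induction rho as [|c rho IH]; intros T g; simpl; [tauto|].
  rewrite <- IH, touches_inform.
  destruct (shares c (causal_prefix rho g)).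
  - rewrite touches_cons. tauto.
  - split; [tauto|]. intros [H|[_ H]]; auto. discriminate.
Qed.

Lemma touches_involves c L : touches (fun z => involves z c) L <-> shares c L = true.
Proof.
  unfold touches. rewrite shares_iff. setoid_rewrite in_cparts. firstorder.
Qed.

(** * Paths in global types *)

Inductive reach : gtype -> list comm -> gtype -> Prop :=
| reach_nil H : reach H [] H
| reach_cons p q bs l G' W H :
    In (l, G') bs -> reach G' W H -> reach (GMsg p q bs) ((p, q, l) :: W) H.

Lemma reach_app H A B H' : reach H (A ++ B) H' <-> exists Hm, reach H A Hm /\ reach Hm B H'.
Proof.
  revert H. induction A as [|c A IH]; intros H; simpl.
  - split; [eauto using reach_nil|]. intros [Hm [H1 H2]]. inversion H1; subst; auto.
  - split.
    + intros Hr. inversion Hr as [|p q bs l G' W0 H0 Hin Hr']; subst.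
      apply IH in Hr' as [Hm [H1 H2]]. eauto using reach_cons.
    + intros [Hm [H1 H2]]. inversion H1; subst. econstructor; eauto. apply IH. eauto.
Qed.

Lemma reach_snoc H W p q bs l G' :
  reach H W (GMsg p q bs) -> In (l, G') bs -> reach H (W ++ [(p, q, l)]) G'.
Proof. intros Hr Hin. apply reach_app. eauto using reach_cons, reach_nil. Qed.

Lemma reach_last H W c H' : reach H (W ++ [c]) H' ->
  exists p q bs l, reach H W (GMsg p q bs) /\ c = (p, q, l) /\ In (l, H') bs.
Proof.
  intros Hr. apply reach_app in Hr as [N [HW Hc]].
  inversion Hc as [|p q bs l G' W0 H0 Hin Hr']; subst. inversion Hr'; subst. eauto 7.
Qed.

Lemma trace_reach H W : trace_of H W -> exists H', reach H W H'.
Proof.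
  induction 1 as [|p q bs l G' s Hin _ [H' HH]]; eauto using reach_cons, reach_nil.
Qed.

Lemma reach_trace H W H' : reach H W H' -> W <> [] -> trace_of H W.
Proof.
  induction 1 as [|p q bs l G' W H Hin Hr IH]; intros Hne; [congruence|].
  destruct W; [eapply tr_one|eapply tr_cons]; eauto. apply IH. discriminate.
Qed.

Lemma subtree_trans A B C : subtree A B -> subtree B C -> subtree A C.
Proof. induction 1; intros; eauto using subtree. Qed.

Lemma reach_subtree H W H' : reach H W H' -> subtree H H'.
Proof. induction 1; eauto using subtree. Qed.

Lemma gwf_subtree G H : gwf G -> subtree G H -> gwf H.
Proof. intros HG Hs H' p q bs Hs' E. eapply (HG H'); eauto using subtree_trans. Qed.

Lemma gwf_reach G W H : gwf G -> reach G W H -> gwf H.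
Proof. eauto using gwf_subtree, reach_subtree. Qed.

Lemma gwf_node p q bs : gwf (GMsg p q bs) -> bs <> [] /\ NoDup (map fst bs).
Proof. intros H. eapply H; eauto using subtree. Qed.

Lemma gwf_child p q bs l G' : gwf (GMsg p q bs) -> In (l, G') bs -> gwf G'.
Proof. eauto using gwf_subtree, subtree. Qed.

Lemma in_part_node z p q bs : bs <> [] -> z = p \/ z = q -> in_part z (GMsg p q bs).
Proof.
  intros Hb Hz. destruct bs as [|[l G'] bs]; [congruence|].
  exists [(p, q, l)]. split; [eapply tr_one; left; eauto|]. simpl. destruct Hz; auto.
Qed.

Lemma in_part_child z p q bs l G' : In (l, G') bs -> in_part z G' -> in_part z (GMsg p q bs).
Proof.
  intros Hin [s [H1 H2]]. exists ((p, q, l) :: s). split; [eapply tr_cons; eauto|].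
  rewrite tparts_cons, in_app_iff. auto.
Qed.

(** * Projections along paths *)

Definition proj_branches z (bs : list (label * gtype)) (Ps : list (label * process)) :=
  Forall2 (fun b c => fst b = fst c /\ proj (snd b) z (snd c)) bs Ps.

Lemma proj_endpoint z p q bs Q : gwf (GMsg p q bs) -> proj (GMsg p q bs) z Q ->
  z = p \/ z = q ->
  (z = q /\ exists Ps, Q = PRecv p Ps /\ proj_branches z bs Ps) \/
  (z = p /\ z <> q /\ exists Ps, Q = PSend q Ps /\ proj_branches z bs Ps).
Proof.
  intros Hw Hp Hz. destruct (gwf_node _ _ _ Hw) as [Hne _].
  inversion Hp; subst.
  - exfalso. eauto using in_part_node.
  - left. eauto.
  - right. eauto.
  - exfalso. destruct Hz; auto.
Qed.

Fixpoint lookup (l : label) (Ps : list (label * process)) : option process :=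
  match Ps with
  | [] => None
  | (l', P) :: Ps' => if l =? l' then Some P else lookup l Ps'
  end.

Definition pstep (Q : process) (c : comm) : process :=
  match Q with
  | PSend _ Ps | PRecv _ Ps =>
    let '(_, _, l) := c in match lookup l Ps with Some P => P | None => PEnd end
  | PEnd => PEnd
  end.

Fixpoint pafter (Q : process) (W : list comm) : process :=
  match W with [] => Q | c :: W' => pafter (pstep Q c) W' end.

Lemma proj_branches_lookup z bs Ps l G' : proj_branches z bs Ps -> NoDup (map fst bs) ->
  In (l, G') bs -> exists P, lookup l Ps = Some P /\ proj G' z P.
Proof.
  induction 1 as [|[l0 G0] [l1 P0] bs Ps [Hf Hpr] HF IH]; simpl in *; intros Hnd Hin;
    [contradiction|].
  subst l1. inversion Hnd as [|? ? Hnotin Hnd']; subst.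
  destruct Hin as [Heq|Hin].
  - injection Heq as -> ->. rewrite Nat.eqb_refl. eauto.
  - destruct (l =? l0) eqn:E; auto.
    apply Nat.eqb_eq in E; subst. exfalso. apply Hnotin. apply in_map_iff. exists (l0, G'); auto.
Qed.

Lemma proj_branches_labels z bs Ps : proj_branches z bs Ps -> map fst bs = map fst Ps.
Proof. induction 1 as [|x y bs Ps [H1 _] _ IH]; simpl; congruence. Qed.

Lemma proj_step z p q bs l G' Q : gwf (GMsg p q bs) -> proj (GMsg p q bs) z Q ->
  In (l, G') bs -> proj G' z (if involves z (p, q, l) then pstep Q (p, q, l) else Q).
Proof.
  intros Hw Hp Hin. destruct (gwf_node _ _ _ Hw) as [Hne Hnd].
  destruct (involves z (p, q, l)) eqn:Ei.
  - apply involves_endpoint in Ei.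
    destruct (proj_endpoint _ _ _ _ _ Hw Hp Ei) as [[_ [Ps [-> HF]]]|[_ [_ [Ps [-> HF]]]]];
      destruct (proj_branches_lookup _ _ _ _ _ HF Hnd Hin) as [P [E1 E2]]; simpl;
      rewrite E1; auto.
  - simpl in Ei. apply orb_false_iff in Ei as [E1 E2]. apply Nat.eqb_neq in E1, E2.
    inversion Hp; subst; try tauto.
    + apply proj_out. eauto using in_part_child.
    + match goal with HF : Forall _ _ |- _ => rewrite Forall_forall in HF; apply (HF (l, G')) end.
      auto.
Qed.

Lemma proj_reach H W H' z Q : reach H W H' -> gwf H -> proj H z Q ->
  proj H' z (pafter Q (hist z W)).
Proof.
  intros Hr. revert Q. induction Hr as [|p q bs l G' W H Hin Hr IH]; intros Q Hw Hp; auto.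
  pose proof (proj_step z p q bs l G' Q Hw Hp Hin) as Hs.
  apply IH in Hs; [|eapply gwf_child; eauto].
  unfold hist in *; simpl. unfold involves in Hs. destruct ((z =? p) || (z =? q)); auto.
Qed.

Lemma proj_same_node z a b bs a' b' bs' Q :
  gwf (GMsg a b bs) -> gwf (GMsg a' b' bs') ->
  proj (GMsg a b bs) z Q -> proj (GMsg a' b' bs') z Q ->
  z = a \/ z = b -> z = a' \/ z = b' ->
  a = a' /\ b = b' /\ map fst bs = map fst bs'.
Proof.
  intros W1 W2 P1 P2 Z1 Z2.
  destruct (proj_endpoint _ _ _ _ _ W1 P1 Z1) as [[E1 [Ps [-> HF]]]|[E1 [N1 [Ps [-> HF]]]]];
  destruct (proj_endpoint _ _ _ _ _ W2 P2 Z2) as [[E2 [Ps' [E HF']]]|[E2 [N2 [Ps' [E HF']]]]];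
  try discriminate; injection E; intros; subst;
  rewrite (proj_branches_labels _ _ _ HF), (proj_branches_labels _ _ _ HF'); auto.
Qed.

Lemma proj_endpoint_in_part z p q bs Q : gwf (GMsg p q bs) -> proj (GMsg p q bs) z Q ->
  z = p \/ z = q -> forall H, proj H z Q -> in_part z H.
Proof.
  intros Hw Hp Hz H HQ. inversion HQ; subst; auto.
  destruct (proj_endpoint _ _ _ _ _ Hw Hp Hz) as [[_ [Ps [E _]]]|[_ [_ [Ps [E _]]]]];
    discriminate.
Qed.

(** * Simulating a causal chain in a sibling branch *)

Lemma filter_split {A} (f : A -> bool) L P x R : filter f L = P ++ x :: R ->
  exists L1 L2, L = L1 ++ x :: L2 /\ filter f L1 = P /\ f x = true /\ filter f L2 = R.
Proof.
  revert P. induction L as [|y L IH]; intros P H; simpl in H; [destruct P; discriminate|].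
  destruct (f y) eqn:Ey.
  - destruct P as [|p P]; injection H.
    + intros <- <-. exists [], L. auto.
    + intros H' <-. destruct (IH P H') as (L1 & L2 & -> & <- & Fx & <-).
      exists (y :: L1), L2. simpl. rewrite Ey. auto.
  - destruct (IH P H) as (L1 & L2 & -> & <- & Fx & <-).
    exists (y :: L1), L2. simpl. rewrite Ey. auto.
Qed.

Lemma split_at_count_unique {A} (f : A -> bool) P1 x R1 P2 y R2 :
  P1 ++ x :: R1 = P2 ++ y :: R2 -> f x = true -> f y = true ->
  length (filter f P1) = length (filter f P2) -> P1 = P2 /\ x = y /\ R1 = R2.
Proof.
  revert P2. induction P1 as [|a P1 IH]; intros [|b P2] H Fx Fy Hl; simpl in H, Hl;
    injection H; intros; subst; auto; try (rewrite ?Fx, ?Fy in Hl; discriminate).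
  destruct (f b); simpl in Hl; [injection Hl as Hl|];
    destruct (IH P2) as (-> & -> & ->); auto.
Qed.

Lemma filter_filter_sub {A} (f g : A -> bool) W : (forall c, f c = true -> g c = true) ->
  filter f (filter g W) = filter f W.
Proof.
  intros H. induction W as [|c W IH]; simpl; auto.
  destruct (g c) eqn:Eg; simpl; destruct (f c) eqn:Ef; rewrite ?IH; auto.
  apply H in Ef. congruence.
Qed.

Lemma list_sum_map_le {A} (f g : A -> nat) L :
  (forall z, f z <= g z) -> list_sum (map f L) <= list_sum (map g L).
Proof. intros H. induction L as [|a L IH]; simpl; auto. specialize (H a). lia. Qed.

Lemma list_sum_map_lt {A} (f g : A -> nat) L z : (forall z, f z <= g z) -> In z L ->
  f z < g z -> list_sum (map f L) < list_sum (map g L).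
Proof.
  intros H Hin Hlt. induction L as [|a L IH]; simpl in *; [contradiction|].
  destruct Hin as [->|Hin].
  - pose proof (list_sum_map_le f g L H). lia.
  - specialize (IH Hin). specialize (H a). lia.
Qed.

Definition joint (s u : participant) (c : comm) : bool := involves s c && involves u c.

Lemma filter_joint_hist s u y W : y = s \/ y = u ->
  filter (joint s u) (hist y W) = filter (joint s u) W.
Proof.
  intros Hy. apply filter_filter_sub. intros c. unfold joint. rewrite andb_true_iff.
  destruct Hy; subst; tauto.
Qed.

Lemma informed_same_count T W1 M1 W2 M2 w : W1 ++ M1 = W2 ++ M2 ->
  length (hist w W1) = length (hist w W2) -> informed T W1 w = informed T W2 w.
Proof.
  intros E Hl. apply app_eq_app in E as [l [[-> _]|[-> _]]];
    rewrite hist_app, length_app in Hl; rewrite informed_app, (informed_silent _ l); auto;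
    apply length_zero_iff_nil; lia.
Qed.

(** A trace [tau] of [H1] along which [r] gets informed by [X] is replayed in [H2], whose
    projections agree with those of [H1] outside [X].  At the current node of [H2], if an
    endpoint outside [X] still has actions of [tau] to perform, its next one is taken (a
    matched move); otherwise the node is crossed along a fixed path to the next action of [r].
    Matched moves decrease [remaining], and the path is finite. *)
Section Simulation.

Variables (H1 H2 : gtype) (X : participant -> bool) (tau : list comm) (r : participant).
Hypothesis gwf_H1 : gwf H1.
Hypothesis gwf_H2 : gwf H2.
Hypothesis proj_agree : forall z, X z = false -> exists Z, proj H1 z Z /\ proj H2 z Z.
Hypothesis reach_tau : exists H, reach H1 tau H.
Hypothesis r_outside : X r = false.
Hypothesis r_informed : informed X tau r = true.

Definition target z := hist z tau.

Definition informed_within z k := exists W W',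
  tau = W ++ W' /\ length (hist z W) = k /\ informed X W z = true.

(** Outside [X], the history of each participant in the replay [t] is comparable with its
    target history, and [z] is informed in [t] as soon as it was at the same point of [tau]. *)
Definition sim_inv t := forall z, X z = false ->
  (exists rest, target z = hist z t ++ rest /\
     (informed_within z (length (hist z t)) -> informed X t z = true)) \/
  (exists ext, hist z t = target z ++ ext /\
     (informed_within z (length (target z)) -> informed X t z = true)).

Definition pending z t := exists c rest, target z = hist z t ++ c :: rest.

Definition remaining t :=
  list_sum (map (fun z => length (target z) - length (hist z t)) (tparts tau)).

Lemma sim_inv_nil : sim_inv [].
Proof.
  intros z Hz. left. exists (target z). split; auto.
  intros (W & W' & _ & HW & Hinf). rewrite informed_silent in Hinf; auto.
  apply length_zero_iff_nil. auto.
Qed.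

Lemma remaining_snoc_le t d : remaining (t ++ [d]) <= remaining t.
Proof. apply list_sum_map_le. intros z. rewrite hist_app, length_app. lia. Qed.

Lemma remaining_snoc_lt t z d : involves z d = true -> pending z t ->
  remaining (t ++ [d]) < remaining t.
Proof.
  intros Hzd [c [rest Hc]]. apply (list_sum_map_lt _ _ _ z).
  - intros y. rewrite hist_app, length_app. lia.
  - apply (in_hist_tparts z tau c). fold (target z). rewrite Hc. apply in_or_app. simpl. auto.
  - rewrite hist_snoc_involved, Hc, !length_app by auto. simpl. lia.
Qed.

Lemma next_action z t Hc d rest : X z = false -> reach H2 t Hc ->
  target z = hist z t ++ d :: rest ->
  exists A B a b bsA l GA Q, tau = A ++ d :: B /\ hist z A = hist z t /\
    d = (a, b, l) /\ (z = a \/ z = b) /\ In (l, GA) bsA /\ gwf (GMsg a b bsA) /\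
    proj (GMsg a b bsA) z Q /\ proj Hc z Q.
Proof.
  intros Hx Hr Hd. destruct (filter_split _ _ _ _ _ Hd) as (A & B & E1 & E2 & E3 & _).
  destruct reach_tau as [He Hre]. rewrite E1 in Hre. apply reach_app in Hre as [HA [HrA HrB]].
  inversion HrB as [|a b bsA l GA W0 H0 Hin _]; subst.
  destruct (proj_agree z Hx) as [Z [PZ1 PZ2]].
  exists A, B, a, b, bsA, l, GA, (pafter Z (hist z A)).
  apply involves_endpoint in E3.
  do 6 (split; [eauto using gwf_reach|]). split.
  - eapply proj_reach; eauto.
  - unfold hist at 1. rewrite E2. eapply proj_reach; eauto.
Qed.

Lemma pending_in_part z t Hc : X z = false -> reach H2 t Hc -> pending z t -> in_part z Hc.
Proof.
  intros Hx Hr [d [rest Hd]].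
  destruct (next_action z t Hc d rest Hx Hr Hd) as (A & B & a & b & bsA & l & GA & Q & _ & _ & _
    & Hz & _ & Hw & HQ & HQ').
  eapply proj_endpoint_in_part; eauto.
Qed.

(** The endpoints outside [X] have seen the same number of [s -> u] communications, hence
    they wait for the same occurrence of [s -> u] in [tau]. *)
Lemma synchronised_endpoints t s u bs z0 :
  reach H2 t (GMsg s u bs) -> sim_inv t -> z0 = s \/ z0 = u -> X z0 = false -> pending z0 t ->
  exists l G' A B, In (l, G') bs /\ tau = A ++ (s, u, l) :: B /\
    forall y, y = s \/ y = u -> X y = false ->
      hist y A = hist y t /\ exists rest, target y = hist y t ++ (s, u, l) :: rest.
Proof.
  intros Hr HI Hz0 Hx0 [d0 [rest0 Hd0]].
  destruct (next_action z0 t _ d0 rest0 Hx0 Hr Hd0)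
    as (A & B & a & b & bsA & l & GA & Q & E1 & E2 & -> & Hab & Hin & Hw & HQ & HQ').
  pose proof (gwf_reach _ _ _ gwf_H2 Hr) as Wc.
  destruct (proj_same_node _ _ _ _ _ _ _ _ Hw Wc HQ HQ' Hab Hz0) as [-> [-> Hlab]].
  assert (Hl : In l (map fst bs)) by (rewrite <- Hlab; apply in_map_iff; exists (l, GA); auto).
  apply in_map_iff in Hl as [[l' G'] [El Hin']]. simpl in El. subst l'.
  exists l, G', A, B. split; [auto|]. split; [auto|].
  set (f := joint s u).
  assert (Ff : forall l', f (s, u, l') = true)
    by (intros; apply andb_true_iff; split; apply involves_endpoint; auto).
  intros y Hy Hxy.
  assert (Hfy : filter f (hist y t) = filter f A)
    by (unfold f; rewrite filter_joint_hist, <- (filter_joint_hist s u z0 A), E2,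
          filter_joint_hist by auto; reflexivity).
  assert (Hcount : length (filter f A) < length (filter f (target y))).
  { unfold target, f. rewrite filter_joint_hist by auto. fold f.
    rewrite E1, filter_app, length_app. simpl. rewrite Ff. simpl. lia. }
  destruct (HI y Hxy) as [[[|d' rest'] [Hre _]]|[ext [Hex _]]].
  - rewrite app_nil_r in Hre. rewrite Hre, Hfy in Hcount. lia.
  - destruct (next_action y t _ d' rest' Hxy Hr Hre)
      as (A' & B' & a' & b' & bsA' & l' & GA' & Q' & F1 & F2 & -> & Hab' & _ & Hw' & HQ1 & HQ2).
    destruct (proj_same_node _ _ _ _ _ _ _ _ Hw' Wc HQ1 HQ2 Hab' Hy) as [-> [-> _]].
    assert (Hlen : length (filter f A) = length (filter f A'))
      by (rewrite <- Hfy, <- F2; unfold f; rewrite filter_joint_hist; auto).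
    rewrite E1 in F1.
    destruct (split_at_count_unique f _ _ _ _ _ _ F1 (Ff l) (Ff l') Hlen) as [<- [Ed _]].
    injection Ed as <-. eauto.
  - assert (length (filter f (target y)) <= length (filter f (hist y t)))
      by (rewrite Hex, filter_app, length_app; lia).
    rewrite Hfy in *. lia.
Qed.

Lemma matched_move_inv t s u l A B : sim_inv t -> tau = A ++ (s, u, l) :: B ->
  (forall y, y = s \/ y = u -> X y = false ->
     hist y A = hist y t /\ exists rest, target y = hist y t ++ (s, u, l) :: rest) ->
  sim_inv (t ++ [(s, u, l)]).
Proof.
  intros HI Etau Hend w Hxw. destruct (involves w (s, u, l)) eqn:Ewd.
  - apply involves_endpoint in Ewd as Hw.
    destruct (Hend w Hw Hxw) as [HA [rest Hre]].
    left. exists rest. rewrite hist_snoc_involved, <- app_assoc by auto. split; auto.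
    intros (W & W' & EW & HW & Hinf).
    rewrite (informed_same_count X W W' (A ++ [(s, u, l)]) B) in Hinf.
    2: { rewrite <- EW, Etau, <- app_assoc. auto. }
    2: { rewrite HW, !hist_snoc_involved, HA by auto. auto. }
    rewrite informed_snoc, inform_endpoint in * by auto.
    assert (Hep : forall y, y = s \/ y = u -> informed X A y = true -> informed X t y = true).
    { intros y Hy Hinf'. destruct (X y) eqn:Xy; [apply informed_mono; auto|].
      destruct (Hend y Hy Xy) as [HAy [resty Hrey]].
      destruct (HI y Xy) as [[rest1 [_ Ht1]]|[ext [Hex _]]].
      - apply Ht1. exists A, ((s, u, l) :: B). rewrite HAy. auto.
      - apply (f_equal (@length comm)) in Hex, Hrey. rewrite !length_app in Hex, Hrey.
        simpl in Hrey. lia. }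
    apply orb_true_iff in Hinf as [Hinf|Hinf]; apply orb_true_iff; auto.
  - rewrite hist_snoc_other, informed_snoc, inform_other by auto. apply HI; auto.
Qed.

Lemma free_move_inv t d : sim_inv t ->
  (forall y, involves y d = true -> X y = false -> ~ pending y t) -> sim_inv (t ++ [d]).
Proof.
  intros HI Hfree w Hxw. destruct (involves w d) eqn:Ewd.
  - right. rewrite hist_snoc_involved by auto. rewrite informed_snoc.
    destruct (HI w Hxw) as [[[|c rest] [Hre Ht]]|[ext [Hex Ht]]].
    + rewrite app_nil_r in Hre. exists [d]. rewrite Hre.
      split; auto. intros Hw. apply inform_mono, Ht. exact Hw.
    + exfalso. apply (Hfree w Ewd Hxw). exists c, rest. exact Hre.
    + exists (ext ++ [d]). rewrite Hex, app_assoc. split; auto.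
      intros Hw. apply inform_mono. auto.
  - rewrite hist_snoc_other, informed_snoc, inform_other by auto. apply HI; auto.
Qed.

Definition progress_from t := exists t' Hc', reach H2 t' Hc' /\ sim_inv t' /\
  remaining t' < remaining t /\ (pending r t' \/ hist r t' = target r).

Lemma matched_progress t s u bs z0 : reach H2 t (GMsg s u bs) -> sim_inv t -> pending r t ->
  z0 = s \/ z0 = u -> X z0 = false -> pending z0 t -> progress_from t.
Proof.
  intros Hr HI Hp Hz0 Hx0 Hpz.
  destruct (synchronised_endpoints t s u bs z0 Hr HI Hz0 Hx0 Hpz)
    as (l & G' & A & B & Hin & Etau & Hend).
  exists (t ++ [(s, u, l)]), G'. repeat split.
  - apply reach_snoc with bs; auto.
  - apply matched_move_inv with A B; auto.
  - apply remaining_snoc_lt with z0; auto. apply involves_endpoint. auto.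
  - destruct (involves r (s, u, l)) eqn:Er.
    + apply involves_endpoint in Er.
      destruct (Hend r Er r_outside) as [_ [[|c rest] Hre]]; [right|left].
      * rewrite hist_snoc_involved by (apply involves_endpoint; auto). auto.
      * exists c, rest. rewrite hist_snoc_involved, <- app_assoc by (apply involves_endpoint; auto).
        auto.
    + left. destruct Hp as [c [rest Hd]]. exists c, rest. rewrite hist_snoc_other; auto.
Qed.

Lemma progress_along pi : forall t Hc N, reach H2 t Hc -> reach Hc pi N -> hist r pi = [] ->
  (exists a b bs, N = GMsg a b bs /\ (r = a \/ r = b)) ->
  sim_inv t -> pending r t -> progress_from t.
Proof.
  induction pi as [|c pi IH]; intros t Hc N Hr Hpi Hh HN HI Hp.
  - inversion Hpi; subst. destruct HN as (a & b & bs & -> & Hrab).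
    eapply matched_progress; eauto.
  - inversion Hpi as [|s u bs l G' W0 H0 Hin Hpi']; subst.
    assert (Er : involves r (s, u, l) = false)
      by (unfold hist in Hh; cbn [filter] in Hh; destruct (involves r (s, u, l)); congruence).
    destruct (classic (exists y, (y = s \/ y = u) /\ X y = false /\ pending y t))
      as [(y & Hy & Hxy & Hpy)|Hno].
    + eapply matched_progress; eauto.
    + destruct (IH (t ++ [(s, u, l)]) G' N) as (t' & Hc' & Hr' & HI' & Hlt & Hfin); auto.
      * apply reach_snoc with bs; auto.
      * unfold hist in Hh. cbn [filter] in Hh. rewrite Er in Hh. exact Hh.
      * apply free_move_inv; auto. intros y Hy Hxy Hpy. apply involves_endpoint in Hy.
        apply Hno. exists y. auto.
      * destruct Hp as [c0 [rest Hd]]. exists c0, rest. rewrite hist_snoc_other; auto.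
      * exists t', Hc'. repeat split; auto.
        eapply Nat.lt_le_trans; [exact Hlt|apply remaining_snoc_le].
Qed.

Lemma progress t Hc : reach H2 t Hc -> sim_inv t -> pending r t -> progress_from t.
Proof.
  intros Hr HI Hp.
  destruct (pending_in_part r t Hc r_outside Hr Hp) as [s0 [Htr Hin]].
  apply in_tparts in Hin as [c [Hc1 Hc2]].
  destruct (hist r s0) as [|x R] eqn:Ehs.
  { assert (Hcr : In c (hist r s0)) by (apply filter_In; auto). rewrite Ehs in Hcr. contradiction. }
  destruct (filter_split (involves r) s0 [] x R Ehs) as (pi & L2 & -> & Hpi & Hx & _).
  destruct (trace_reach _ _ Htr) as [He Hre]. apply reach_app in Hre as [N [Hr1 Hr2]].
  inversion Hr2 as [|a b bs l G' W0 H0 Hin' _]; subst.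
  apply (progress_along pi t Hc (GMsg a b bs)); auto.
  exists a, b, bs. split; auto. apply involves_endpoint in Hx. exact Hx.
Qed.

Lemma simulation : exists t Hc, reach H2 t Hc /\ hist r t = target r /\ informed X t r = true.
Proof.
  assert (Hp : pending r []).
  { destruct (hist r tau) as [|c rest] eqn:E.
    - rewrite informed_silent in r_informed; congruence.
    - exists c, rest. exact E. }
  assert (Hgoal : forall n t Hc, remaining t = n -> reach H2 t Hc -> sim_inv t -> pending r t ->
    exists t Hc, reach H2 t Hc /\ hist r t = target r /\ informed X t r = true).
  { intros n. induction n as [n IH] using lt_wf_ind. intros t Hc En Hr HI Hpt.
    destruct (progress t Hc Hr HI Hpt) as (t' & Hc' & Hr' & HI' & Hlt & [Hp'|Hfin]).
    - apply (IH (remaining t') ltac:(lia) t' Hc'); auto.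
    - exists t', Hc'. repeat split; auto.
      destruct (HI' r r_outside) as [[rest [_ Ht]]|[ext [_ Ht]]]; apply Ht;
        exists tau, []; rewrite ?Hfin; rewrite app_nil_r; auto. }
  apply (Hgoal _ [] H2 eq_refl); auto using reach_nil, sim_inv_nil.
Qed.

End Simulation.

Lemma simulate_causal_chain H1 H2 X tau a r : gwf H1 -> gwf H2 ->
  (forall z, X z = false -> exists Z, proj H1 z Z /\ proj H2 z Z) ->
  (exists H, reach H1 (tau ++ [a]) H) -> involves r a = true -> X r = false ->
  touches X (causal_prefix tau [a]) ->
  exists rho H, reach H2 (rho ++ [a]) H /\ hist r rho = hist r tau /\
    touches X (causal_prefix rho [a]).
Proof.
  intros W1 W2 Hagree Htau Hra HXr Ht.
  rewrite touches_causal_prefix, <- (informed_last_involved _ _ _ r) in Ht by auto.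
  destruct (simulation H1 H2 X (tau ++ [a]) r W1 W2 Hagree Htau HXr Ht)
    as (t & Hc & Hr & Hh & Hinf).
  unfold target in Hh. rewrite hist_snoc_involved in Hh by auto.
  destruct (filter_split _ _ _ _ _ Hh) as (rho & rest & -> & Hrho & _ & Hrest).
  replace (rho ++ a :: rest) with ((rho ++ [a]) ++ rest) in Hr, Hinf
    by (rewrite <- app_assoc; auto).
  apply reach_app in Hr as [H [Hr _]].
  exists rho, H. repeat split; auto.
  rewrite touches_causal_prefix, <- (informed_last_involved _ _ _ r) by auto.
  rewrite informed_app, informed_silent in Hinf; auto.
Qed.

(** * Semantic projectability *)

Lemma event_pequiv_snoc G g Y c : event G g -> pequiv g (Y ++ [c]) ->
  exists t, trace_of G (t ++ [c]) /\ pointed (Y ++ [c]) /\ pequiv (Y ++ [c]) (ev t c) /\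
    cm g = c.
Proof.
  intros (t & a & Htr & Hg) H. rewrite perm_equivE in Hg.
  destruct (ev_pequiv_snoc t a Y c) as (-> & Hp & HY).
  { eapply rt_trans; [apply pequiv_sym, Hg|exact H]. }
  exists t. repeat split; auto.
  - unfold ev. rewrite causal_prefixE. apply pequiv_app_r, pequiv_sym. auto.
  - apply pequiv_sym in H. destruct (pequiv_pointed_snoc _ _ _ H Hp) as [Y' [-> _]].
    apply last_last.
Qed.

Lemma conflict_traces G g1 g2 sg p q l1 l2 s1 a1 r :
  event G g1 -> event G g2 ->
  pequiv g1 (sg ++ [(p, q, l1)]) -> pequiv g2 (sg ++ [(p, q, l2)]) ->
  event G (s1 ++ [a1]) -> causal_le g1 (s1 ++ [a1]) ->
  involves r a1 = true -> ~ In r (cparts (cm g1)) ->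
  exists t0 t1 t', trace_of G (t0 ++ (p, q, l1) :: t1 ++ [a1]) /\
    trace_of G (t' ++ [(p, q, l2)]) /\ hist p t0 = hist p t' /\
    shares (p, q, l1) (causal_prefix t1 [a1]) = true /\
    pequiv g2 (causal_prefix t0 [(p, q, l2)]) /\
    hist r s1 = hist r (t0 ++ (p, q, l1) :: t1) /\ involves r (p, q, l1) = false.
Proof.
  intros Hev1 Hev2 Hg1 Hg2 Hev1' Hle Hra Hrc.
  destruct (event_pequiv_snoc _ _ _ _ Hev1 Hg1) as (_ & _ & Hpt & _ & Hcm).
  rewrite Hcm, in_cparts, not_true_iff_false in Hrc.
  destruct (event_pequiv_snoc _ _ _ _ Hev2 Hg2) as (t' & Htr' & _ & Hsg' & _).
  destruct (event_pequiv_snoc _ _ _ _ Hev1' (rt_refl _ _ _)) as (t & Htr & _ & Hs1 & _).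
  destruct (causal_le_snoc _ _ _ _ Hg1 Hle) as [u Hu].
  destruct (causal_successor_split sg (p, q, l1) t a1 u Hpt) as (t0 & t1 & -> & Hsh & Hpast1).
  { eapply rt_trans; eauto. }
  { intros ->. congruence. }
  assert (Hp : involves p (p, q, l1) = true) by (apply involves_endpoint; auto).
  exists t0, t1, t'. rewrite <- app_assoc in Htr. repeat split; auto.
  - rewrite (pequiv_causal_prefix_hist p _ _ _ Hp Hpast1).
    symmetry. exact (pequiv_causal_prefix_hist p _ _ (p, q, l2) Hp Hsg').
  - eapply rt_trans; [exact Hg2|].
    apply (pequiv_causal_prefix_same_parts _ _ (p, q, l1)); auto.
  - symmetry. exact (pequiv_causal_prefix_hist r _ _ _ Hra Hs1).
Qed.

Lemma sibling_branches G t0 p q l1 tau t' l2 : gwf G -> projectable G ->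
  trace_of G (t0 ++ (p, q, l1) :: tau) -> trace_of G (t' ++ [(p, q, l2)]) ->
  hist p t0 = hist p t' ->
  exists bs H1 H2, reach G t0 (GMsg p q bs) /\ In (l1, H1) bs /\ In (l2, H2) bs /\
    (exists H, reach H1 tau H) /\
    forall z, involves z (p, q, l1) = false -> exists Z, proj H1 z Z /\ proj H2 z Z.
Proof.
  intros Hwf Hpr Htr Htr' Hh.
  destruct (trace_reach _ _ Htr) as [He Hr]. apply reach_app in Hr as [N [HrN HrN']].
  inversion HrN' as [|? ? bs ? H1 ? ? Hin1 Hr1]; subst.
  destruct (trace_reach _ _ Htr') as [He' Hr'].
  destruct (reach_last _ _ _ _ Hr') as (p' & q' & bs' & l' & HrN2 & Ec & Hin2').
  injection Ec as <- <- <-.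
  assert (WN : gwf (GMsg p q bs)) by eauto using gwf_reach.
  destruct (Hpr p) as [P HP].
  destruct (proj_same_node p p q bs p q bs' (pafter P (hist p t0)) WN)
    as (_ & _ & Hlab); eauto using gwf_reach, proj_reach.
  { rewrite Hh. eauto using proj_reach. }
  assert (Hl2 : In l2 (map fst bs)) by (rewrite Hlab; apply in_map_iff; exists (l2, He'); auto).
  apply in_map_iff in Hl2 as [[l2' H2] [El2 Hin2]]. simpl in El2. subst l2'.
  exists bs, H1, H2. repeat split; eauto.
  intros z Hz. destruct (Hpr z) as [Pz HPz].
  pose proof (proj_reach _ _ _ z Pz HrN Hwf HPz) as PN.
  exists (pafter Pz (hist z t0)).
  pose proof (proj_step _ _ _ _ _ _ _ WN PN Hin1) as P1.
  pose proof (proj_step _ _ _ _ _ _ _ WN PN Hin2) as P2.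
  cbn [involves] in Hz, P1, P2. rewrite Hz in P1, P2. auto.
Qed.

Lemma conflict_witness G t0 p q l bs H2 rho a H g :
  reach G t0 (GMsg p q bs) -> In (l, H2) bs -> reach H2 (rho ++ [a]) H ->
  shares (p, q, l) (causal_prefix rho [a]) = true ->
  pequiv g (causal_prefix t0 [(p, q, l)]) ->
  event G (causes (t0 ++ (p, q, l) :: rho) [a] ++ [a]) /\
  causal_le g (causes (t0 ++ (p, q, l) :: rho) [a] ++ [a]).
Proof.
  intros HrN Hin Hr Hsh Hg. rewrite <- causal_prefixE. split.
  - exists (t0 ++ (p, q, l) :: rho), a. split; [|apply rst_refl].
    apply reach_trace with H; [|intros E; apply app_eq_nil in E as [_ E]; discriminate].
    rewrite <- app_assoc. apply reach_app. exists (GMsg p q bs). split; auto.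
    simpl. econstructor; eauto.
  - destruct (causal_prefix_extend t0 [(p, q, l)] (causal_prefix rho [a])) as [s' Hs'].
    exists (causal_prefix t0 [(p, q, l)]), s'. rewrite !perm_equivE. split; auto.
    rewrite causal_prefix_app. cbn [causal_prefix]. rewrite Hsh. exact Hs'.
Qed.

Lemma tproj_cons_other r c s : involves r c = false -> tproj (c :: s) r = tproj s r.
Proof.
  destruct c as [[a b] l]. simpl. intros Hr. apply orb_false_iff in Hr as [-> ->].
  reflexivity.
Qed.

Lemma tproj_eq_of_hist r s s' : hist r s = hist r s' -> tproj s r = tproj s' r.
Proof. intros H. rewrite tproj_hist, H, <- tproj_hist. reflexivity. Qed.

Theorem mainTheorem3 (G : gtype) :
  gwf G -> gregular G -> projectable G -> sem_projectable G.
Proof.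
  intros Hwf _ Hpr g1 g2 Hev1 Hev2 (sg & p & q & l1 & l2 & _ & Hg1 & Hg2) s1 a1 r Hev1' Hle
    Hra Hrc.
  rewrite perm_equivE in Hg1, Hg2. apply in_cparts in Hra.
  destruct (conflict_traces G g1 g2 sg p q l1 l2 s1 a1 r)
    as (t0 & t1 & t' & Htr & Htr' & Hhp & Hsh & Hg2' & Hhr1 & Hrc'); auto.
  destruct (sibling_branches G t0 p q l1 (t1 ++ [a1]) t' l2)
    as (bs & H1 & H2 & HrN & Hin1 & Hin2 & Htau & Hagree); auto.
  apply touches_involves in Hsh.
  destruct (simulate_causal_chain H1 H2 (fun z => involves z (p, q, l1)) t1 a1 r)
    as (rho & H & Hrho & Hhr & Htouch); eauto using gwf_reach, gwf_child.
  apply (touches_involves (p, q, l2)) in Htouch.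
  destruct (conflict_witness G t0 p q l2 bs H2 rho a1 H g2) as [Hev Hle2]; auto.
  exists (causes (t0 ++ (p, q, l2) :: rho) [a1]). repeat split; auto.
  rewrite tproj_causes, (tproj_eq_of_hist r s1 _ Hhr1), !tproj_app, !tproj_cons_other,
    (tproj_eq_of_hist r rho t1 Hhr) by (rewrite ?tparts_single, ?in_cparts; auto).
  reflexivity.
Qed.
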